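(* Under the degree-corrected stochastic block model $DCSBM(n,P,\Theta,Z)$, the matrix $X^*$ has exactly $K$ distinct rows, and for any nodes $i\ne j$ with $g_i=g_j$, the $i$-th row of $X^*$ equals the $j$-th row of $X^*$.
   Context: $n$ nodes, each in exactly one of $K$ communities, $g_i$ the community of node $i$, every community nonempty; $Z\in\{0,1\}^{n\times K}$ with $Z_{ik}=1$ iff $g_i=k$. $P$ is a $K\times K$ symmetric, nonnegative, nonsingular, irreducible matrix; $\theta\in\mathbb{R}^n$ has positive entries and $\Theta=\mathrm{diag}(\theta)$. Let $\Omega=\Theta ZPZ'\Theta$, which has rank $K$. Let $\lambda_1,\dots,\lambda_K$ be the nonzero eigenvalues of $\Omega$ in descending order of magnitude, $E_\Omega=\mathrm{diag}(\lambda_1,\dots,\lambda_K)$, and $V_\Omega$ the $n\times K$ matrix whose $k$-th column is a unit-norm eigenvector of $\Omega$ for $\lambda_k$. Set $X=V_\Omega E_\Omega$; $X^*$ is obtained by dividing each row of $X$ by its Euclidean norm. *)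

From HB Require Import structures.
From mathcomp Require Import all_boot all_order all_algebra.
Set Implicit Arguments. Unset Strict Implicit. Unset Printing Implicit Defensive.
Import Order.TTheory GRing.Theory Num.Theory.
Local Open Scope ring_scope.

Definition memb_mx (R : nzRingType) n K (g : 'I_n -> 'I_K) : 'M[R]_(n, K) :=
  \matrix_(i < n, k < K) (g i == k)%:R.

Definition dcsbm_Omega (R : nzRingType) n K (g : 'I_n -> 'I_K)
  (P : 'M[R]_K) (theta : 'rV[R]_n) : 'M[R]_n :=
  diag_mx theta *m memb_mx R g *m P *m (memb_mx R g)^T *m diag_mx theta.

Definition irreducible_mx (R : numDomainType) K (P : 'M[R]_K) : Prop :=
  forall i j : 'I_K, exists m : nat, 0 < (P ^+ m) i j.

Definition row_normalize (R : rcfType) n K (X : 'M[R]_(n, K)) : 'M[R]_(n, K) :=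
  \matrix_(i < n, k < K) (X i k / Num.sqrt (\sum_(l < K) X i l ^+ 2)).

From HB Require Import structures.
From mathcomp Require Import all_boot all_order all_algebra.
Set Implicit Arguments. Unset Strict Implicit. Unset Printing Implicit Defensive.
Import Order.TTheory GRing.Theory Num.Theory.
Local Open Scope ring_scope.

(* Since the columns of V are eigenvectors of Omega = Theta Z P Z' Theta,
   X = V diag(lam) = Omega V = Theta Z M with the K x K matrix
   M = P Z' Theta V, so row i of X is theta_i times row g_i of M.
   Normalization removes the positive factor theta_i, hence row i of X* is
   the normalized row g_i of M.  Moreover V' X = diag(lam) is invertible, so
   M is invertible: its rows are nonzero and pairwise non-proportional, and
   normalizing them yields K distinct rows, one per community. *)

Section RowNormalize.

Variable R : rcfType.

Definition row_norm K (v : 'rV[R]_K) : R := Num.sqrt (\sum_l v 0 l ^+ 2).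

Lemma row_row_normalize n K (X : 'M[R]_(n, K)) i :
  row i (row_normalize X) = (row_norm (row i X))^-1 *: row i X.
Proof.
apply/rowP => k; rewrite !mxE mulrC /row_norm.
by under [in RHS]eq_bigr do rewrite mxE.
Qed.

Lemma row_normZ K c (v : 'rV[R]_K) : row_norm (c *: v) = `|c| * row_norm v.
Proof.
rewrite /row_norm -sqrtr_sqr -sqrtrM ?sqr_ge0 // mulr_sumr.
by congr Num.sqrt; apply: eq_bigr => l _; rewrite mxE exprMn.
Qed.

Lemma row_norm_eq0 K (v : 'rV[R]_K) : (row_norm v == 0) = (v == 0).
Proof.
have sq_ge0 l : 0 <= v 0 l ^+ 2 by exact: sqr_ge0.
rewrite sqrtr_eq0 le_eqVlt ltNge sumr_ge0 //= orbF psumr_eq0 //.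
apply/allP/eqP => [v0 | -> l _]; last by rewrite mxE expr2 mulr0 eqxx.
by apply/rowP => l; apply/eqP; rewrite mxE -sqrf_eq0 (implyP (v0 l _)) ?mem_index_enum.
Qed.

Lemma row_normalize_rowZ m n K (X : 'M[R]_(m, K)) (Y : 'M[R]_(n, K)) i j c :
  0 < c -> row i X = c *: row j Y ->
  row i (row_normalize X) = row j (row_normalize Y).
Proof.
move=> c_gt0 XY; rewrite !row_row_normalize XY row_normZ gtr0_norm //.
by rewrite scalerA invfM mulrAC mulVf ?mul1r // gt_eqF.
Qed.

Lemma row_normalize_inj K (M : 'M[R]_K) :
  M \in unitmx -> injective (fun k => row k (row_normalize M)).
Proof.
rewrite -row_free_unit => freeM k l /=; rewrite !row_row_normalize.
set a := (row_norm _)^-1; set b := (row_norm _)^-1 => Ekl.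
have a_neq0 : a != 0.
  rewrite invr_eq0 row_norm_eq0 rowE mulmx_free_eq0 //.
  by apply/eqP => /rowP/(_ k)/eqP; rewrite !mxE !eqxx oner_eq0.
apply/eqP; apply: contraNT a_neq0 => neq_kl.
have : (a *: delta_mx 0 k - b *: delta_mx 0 l : 'rV_K) *m M == 0.
  by rewrite mulmxBl -!scalemxAl -!rowE Ekl subrr.
rewrite mulmx_free_eq0 // subr_eq0 => /eqP/rowP/(_ k)/eqP.
by rewrite !mxE !eqxx (negbTE neq_kl) mulr1 mulr0.
Qed.

End RowNormalize.

Lemma row_diag_mul (R : pzSemiRingType) m n (d : 'rV[R]_m) (A : 'M[R]_(m, n)) i :
  row i (diag_mx d *m A) = d 0 i *: row i A.
Proof. by rewrite row_mul row_diag_mx -scalemxAl -rowE. Qed.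

Lemma row_memb_mul (R : nzRingType) n K m (g : 'I_n -> 'I_K) (A : 'M[R]_(K, m)) i :
  row i (memb_mx R g *m A) = row (g i) A.
Proof.
rewrite row_mul [RHS]rowE; congr (_ *m _).
by apply/rowP => k; rewrite !mxE eq_sym.
Qed.

Lemma size_undup_map_surj (I J : finType) (T : eqType) (g : I -> J) (f : J -> T) :
  injective f -> (forall j, exists i, g i = j) ->
  size (undup [seq f (g i) | i <- enum I]) = #|J|.
Proof.
move=> f_inj g_surj; rewrite -[X in undup X]/(map (f \o g) _) map_comp.
rewrite undup_map_inj // size_map.
rewrite -(card_uniqP (undup_uniq _)); apply: eq_card => j.
have [i <-] := g_surj j; rewrite mem_undup.
by apply/mapP; exists i; rewrite ?mem_enum.
Qed.

Section Dcsbm.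

Variables (R : rcfType) (n K : nat) (g : 'I_n -> 'I_K).
Variables (P : 'M[R]_K) (theta : 'rV[R]_n) (lam : 'I_K -> R) (V : 'M[R]_(n, K)).

Definition dcsbm_core : 'M[R]_K := P *m (memb_mx R g)^T *m diag_mx theta *m V.

Hypothesis V_eigen :
  forall k, dcsbm_Omega g P theta *m col k V = lam k *: col k V.

Lemma dcsbm_eigen_factor :
  V *m diag_mx (\row_k lam k) = diag_mx theta *m memb_mx R g *m dcsbm_core.
Proof.
have -> : V *m diag_mx (\row_k lam k) = dcsbm_Omega g P theta *m V.
  apply/matrixP => i k; rewrite mul_mx_diag !mxE mulrC.
  have /matrixP/(_ i 0) := V_eigen k; rewrite !mxE => <-.
  by apply: eq_bigr => j _; rewrite !mxE.
by rewrite /dcsbm_Omega /dcsbm_core !mulmxA.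
Qed.

Lemma dcsbm_core_unit :
  V^T *m V = 1%:M -> (forall k, lam k != 0) -> dcsbm_core \in unitmx.
Proof.
move=> VtV lam_neq0.
have : V^T *m (diag_mx theta *m memb_mx R g) *m dcsbm_core \in unitmx.
  rewrite -mulmxA -dcsbm_eigen_factor mulmxA VtV mul1mx unitmxE det_diag unitfE.
  by apply/prodf_neq0 => k _; rewrite mxE.
by rewrite unitmx_mul => /andP[].
Qed.

End Dcsbm.

Theorem lemma2 (R : rcfType) (n K : nat) (g : 'I_n -> 'I_K)
  (P : 'M[R]_K) (theta : 'rV[R]_n)
  (lam : 'I_K -> R) (V : 'M[R]_(n, K)) :
  (* every community nonempty *)
  (forall k : 'I_K, exists i : 'I_n, g i = k) ->
  (* P symmetric, nonnegative, nonsingular, irreducible *)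
  P^T = P ->
  (forall k l : 'I_K, 0 <= P k l) ->
  P \in unitmx ->
  irreducible_mx P ->
  (* theta positive *)
  (forall i : 'I_n, 0 < theta 0 i) ->
  (* lam_1..lam_K: the nonzero eigenvalues of Omega, descending magnitude,
     V: orthonormal columns, column k a unit eigenvector for lam k *)
  (forall k : 'I_K, lam k != 0) ->
  (forall k l : 'I_K, (k <= l)%N -> `|lam l| <= `|lam k|) ->
  V^T *m V = 1%:M ->
  (forall k : 'I_K, dcsbm_Omega g P theta *m col k V = lam k *: col k V) ->
  let X := V *m diag_mx (\row_k lam k) in
  let Xs := row_normalize X in
  size (undup [seq row i Xs | i <- enum 'I_n]) = K /\
  (forall i j : 'I_n, i != j -> g i = g j -> row i Xs = row j Xs).
Proof.
(* Only the eigen-decomposition and theta > 0 matter. *)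
move=> g_surj _ _ _ _ theta_gt0 lam_neq0 _ VtV V_eigen X Xs.
set M := dcsbm_core g P theta V.
have rowXs i : row i Xs = row (g i) (row_normalize M).
  apply: row_normalize_rowZ (theta_gt0 i) _.
  by rewrite /X (dcsbm_eigen_factor V_eigen) -mulmxA row_diag_mul row_memb_mul.
split; last by move=> i j _ gij; rewrite !rowXs gij.
have normM_inj := row_normalize_inj (dcsbm_core_unit V_eigen VtV lam_neq0).
by rewrite (eq_map rowXs) (size_undup_map_surj normM_inj) ?card_ord.
Qed.
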